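(* Let $\mathcal{X}$ be a finite set of locations with metric $d$, let $\pi$ be a prior distribution on $\mathcal{X}$ with $\pi(x)>0$ for all $x$, let $\{\Phi_k\}$ be a partition of $\mathcal{X}$ into nonempty disjoint sets, and let $\epsilon_k\ge0$. Let $f(\cdot\mid\cdot)$ be an obfuscation mechanism with $f(x'\mid x)\le e^{\epsilon_k}f(x'\mid y)$ for all $x,y\in\Phi_k$, all $x'\in\mathcal{X}$ and all $k$. Then for every $x'\in\mathcal{X}$ with $\Pr(x')>0$, $$ExpEr(x')\ \ge\ \sum_k \Pr(\Phi_k\mid x')\,e^{-\epsilon_k}\,E'(\Phi_k),$$ where $\Pr(\Phi_k\mid x')=\sum_{y\in\Phi_k}\Pr(y\mid x')$ (and these satisfy $\sum_k\Pr(\Phi_k\mid x')=1$).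
   Context: An obfuscation mechanism is a family of probability distributions $f(\cdot\mid x)$ on $\mathcal{X}$, one for each true location $x\in\mathcal{X}$; $f(x'\mid x)$ is the probability of reporting pseudo-location $x'$ when the true location is $x$. Define $\Pr(x')=\sum_{x\in\mathcal{X}}\pi(x)f(x'\mid x)$ and, when $\Pr(x')>0$, the posterior $\Pr(x\mid x')=\pi(x)f(x'\mid x)/\Pr(x')$. The conditional expected inference error is $$ExpEr(x')=\min_{\hat{x}\in\mathcal{X}}\sum_{x\in\mathcal{X}}\Pr(x\mid x')\,d(\hat{x},x).$$ For a nonempty $\Phi\subseteq\mathcal{X}$, define $$E'(\Phi)=\min_{\hat{x}\in\mathcal{X}}\sum_{x\in\Phi}\frac{\pi(x)}{\sum_{y\in\Phi}\pi(y)}\,d(\hat{x},x).$$ *)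

From mathcomp Require Import all_boot all_order all_algebra.
From mathcomp Require Import all_classical all_reals all_analysis.
Set Implicit Arguments. Unset Strict Implicit. Unset Printing Implicit Defensive.
Import Order.TTheory GRing.Theory Num.Theory.
Local Open Scope ring_scope.

Section Defs.
Variables (R : realType) (X : finType).

(* minimum over the (nonempty) finite type X of F, witness x0 only ensures nonemptiness *)
Definition minX (x0 : X) (F : X -> R) : R := F [arg min_(i < x0) F i]%O.

Definition is_metric (d : X -> X -> R) : Prop :=
  (forall x y, 0 <= d x y) /\ (forall x y, d x y = 0 <-> x = y) /\
  (forall x y, d x y = d y x) /\ (forall x y z, d x z <= d x y + d y z).

Definition is_distr (p : X -> R) : Prop :=
  (forall x, 0 <= p x) /\ \sum_(x : X) p x = 1.

(* f x' x = probability of reporting x' given true location x *)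
Definition is_mechanism (f : X -> X -> R) : Prop :=
  forall x, is_distr (fun x' => f x' x).

Definition Prx (pi : X -> R) (f : X -> X -> R) (x' : X) : R :=
  \sum_(x : X) pi x * f x' x.

Definition posterior (pi : X -> R) (f : X -> X -> R) (x' x : X) : R :=
  pi x * f x' x / Prx pi f x'.

Definition ExpEr (d : X -> X -> R) (pi : X -> R) (f : X -> X -> R) (x' : X) : R :=
  minX x' (fun xh => \sum_(x : X) posterior pi f x' x * d xh x).

Definition Eprime (d : X -> X -> R) (pi : X -> R) (x0 : X) (Phi : {set X}) : R :=
  minX x0 (fun xh => \sum_(x in Phi) pi x / (\sum_(y in Phi) pi y) * d xh x).

Definition PrPhi (pi : X -> R) (f : X -> X -> R) (x' : X) (Phi : {set X}) : R :=
  \sum_(y in Phi) posterior pi f x' y.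

End Defs.

From mathcomp Require Import all_boot all_order all_algebra.
From mathcomp Require Import all_classical all_reals all_analysis.
From mathcomp Require Import ring.
Import Order.TTheory GRing.Theory Num.Theory.
Local Open Scope ring_scope.

(* Fix the adversary's optimal guess xh for ExpEr(x').  Since the blocks
   Phi_k partition X, the expected error of xh splits into one partial sum
   per block, and it suffices to bound each block separately:
     Pr(Phi_k | x') e^{-eps_k} E'(Phi_k) <= sum_{x in Phi_k} Pr(x | x') d(xh,x).
   Inside a block the mechanism is eps_k-indistinguishable, so every f(x'|x)
   with x in Phi_k dominates e^{-eps_k} times the pi-weighted average of f(x'|.)
   over Phi_k (lemma [weighted_avg_le]).  Replacing f(x'|x) by that constant
   turns the block sum into Pr(Phi_k | x') e^{-eps_k} times the pi-weighted mean
   distance from xh to Phi_k, which is at least E'(Phi_k) because E' minimises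
   over all guesses (lemma [Eprime_le_guess]). *)

Section Bounds.
Context {R : realType} {X : finType}.
Implicit Types (F g w : X -> R) (P : {set X}).

Lemma minX_le (x0 : X) F y : minX x0 F <= F y.
Proof. by rewrite /minX; case: arg_minP => // i _; apply. Qed.

Lemma sum_over_partition (K : finType) (Phi : K -> {set X}) F :
  (forall k l, k != l -> [disjoint Phi k & Phi l]) ->
  (forall x, exists k, x \in Phi k) ->
  \sum_(x : X) F x = \sum_(k : K) \sum_(x in Phi k) F x.
Proof.
move=> disj cov.
under [RHS]eq_bigr do rewrite big_mkcond.
rewrite exchange_big /=; apply: eq_bigr => x _.
have [k0 xk0] := cov x.
rewrite (bigD1 k0) //= xk0 big1 ?addr0 // => k /disj.
by rewrite disjoint_sym => /disjointFr ->.
Qed.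

Lemma block_mass_gt0 (pi : X -> R) P :
  (forall x, 0 < pi x) -> (0 < #|P|)%N -> 0 < \sum_(y in P) pi y.
Proof.
move=> pi_gt0 /card_gt0P [y yP].
rewrite (bigD1 y) //= ltr_pwDl // sumr_ge0 // => z _.
exact: ltW.
Qed.

Lemma weighted_avg_le w g P c x :
  (forall y, y \in P -> 0 <= w y) -> 0 < \sum_(y in P) w y ->
  (forall y, y \in P -> g y <= c * g x) ->
  (\sum_(y in P) w y * g y) / (\sum_(y in P) w y) <= c * g x.
Proof.
move=> w_ge0 W_gt0 g_le; rewrite ler_pdivrMr // mulr_sumr.
apply: ler_sum => y yP; rewrite [_ * w y]mulrC.
by rewrite ler_wpM2l ?w_ge0 ?g_le.
Qed.

Lemma Eprime_le_guess (d : X -> X -> R) (pi : X -> R) (x0 xh : X) P :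
  0 < \sum_(y in P) pi y ->
  Eprime d pi x0 P <= (\sum_(x in P) pi x * d xh x) / \sum_(y in P) pi y.
Proof.
move=> S_gt0; apply: le_trans (minX_le _ _ xh) _.
rewrite mulr_suml le_eqVlt; apply/orP; left; apply/eqP.
apply: eq_bigr => x _; field; exact: lt0r_neq0.
Qed.

Lemma PrPhiE (pi : X -> R) (f : X -> X -> R) x' P :
  PrPhi pi f x' P = (\sum_(y in P) pi y * f x' y) / Prx pi f x'.
Proof. by rewrite /PrPhi /posterior mulr_suml. Qed.

Lemma block_error_bound (d f : X -> X -> R) (pi : X -> R) P eps (x' xh : X) :
  (forall x y, 0 <= d x y) -> (forall x, 0 < pi x) ->
  (forall a b, 0 <= f a b) -> (0 < #|P|)%N ->
  (forall x y, x \in P -> y \in P -> f x' x <= expR eps * f x' y) ->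
  0 < Prx pi f x' ->
  PrPhi pi f x' P * expR (- eps) * Eprime d pi x' P
    <= \sum_(x in P) posterior pi f x' x * d xh x.
Proof.
move=> d_ge0 pi_gt0 f_ge0 P_ne f_ind Q_gt0.
have S_gt0 := block_mass_gt0 pi P pi_gt0 P_ne.
set Q := Prx pi f x'; set S := \sum_(y in P) pi y.
set A := \sum_(y in P) pi y * f x' y; set B := \sum_(x in P) pi x * d xh x.
set e := expR (- eps).
have f_lb x : x \in P -> e * (A / S) <= f x' x.
  move=> xP; rewrite -ler_pdivlMl ?expR_gt0 // /e expRN invrK.
  apply: weighted_avg_le => // [y _|y yP]; [exact: ltW | exact: f_ind].
have A_ge0 : 0 <= A by apply: sumr_ge0 => y _; rewrite mulr_ge0 ?f_ge0 ?ltW ?pi_gt0.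
have coef_ge0 : 0 <= A / Q * e by rewrite mulr_ge0 ?divr_ge0 ?expR_ge0 ?(ltW Q_gt0).
rewrite PrPhiE -/A -/Q; apply: le_trans (_ : A / Q * e * (B / S) <= _).
  by rewrite ler_wpM2l // Eprime_le_guess.
have -> : A / Q * e * (B / S) = \sum_(x in P) pi x * d xh x * (e * (A / S)) / Q.
  rewrite -mulr_suml -mulr_suml -/B; field; by rewrite !lt0r_neq0.
apply: ler_sum => x xP; rewrite /posterior -/Q.
have -> : pi x * f x' x / Q * d xh x = pi x * d xh x * f x' x / Q by field; exact: lt0r_neq0.
rewrite ler_wpM2r ?invr_ge0 ?(ltW Q_gt0) // ler_wpM2l ?f_lb //.
by rewrite mulr_ge0 ?d_ge0 ?(ltW (pi_gt0 x)).
Qed.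

End Bounds.

Theorem mainTheorem2 (R : realType) (X : finType) (d : X -> X -> R)
  (pi : X -> R) (K : finType) (Phi : K -> {set X}) (eps : K -> R)
  (f : X -> X -> R) :
  is_metric d ->
  is_distr pi -> (forall x, 0 < pi x) ->
  (forall k, (0 < #|Phi k|)%N) ->
  (forall k l, k != l -> [disjoint Phi k & Phi l]) ->
  (forall x, exists k, x \in Phi k) ->
  (forall k, 0 <= eps k) ->
  is_mechanism f ->
  (forall k x y x', x \in Phi k -> y \in Phi k -> f x' x <= expR (eps k) * f x' y) ->
  forall x', 0 < Prx pi f x' ->
    \sum_(k : K) PrPhi pi f x' (Phi k) * expR (- eps k) * Eprime d pi x' (Phi k)
      <= ExpEr d pi f x'.
Proof.
move=> [d_ge0 _] _ pi_gt0 Phi_ne disj cov _ mech f_ind x' Q_gt0.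
have f_ge0 a b : 0 <= f a b by case: (mech b).
rewrite /ExpEr /minX; set xh := Order.arg_min _ _ _.
rewrite (sum_over_partition K Phi (fun x => posterior pi f x' x * d xh x) disj cov).
apply: ler_sum => k _; apply: block_error_bound => //.
by move=> x y; apply: (f_ind k).
Qed.
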